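(* Let $S:\mathbb{R}^6\to\mathbb{R}^6$, $(a',b',c',d',e',f')\mapsto(a,b,c,d,e,f)$, be the map $$a=\tfrac12(a'+b'-d'+e'),\quad b=\tfrac12(-a'-b'-d'+e')-1,\quad c=c',$$ $$d=\tfrac12(-a'+b'+d'+e'),\quad e=\tfrac12(a'-b'+d'+e'),\quad f=f'.$$ If $(a',b',c',d',e',f')$ is SU(1,1)-admissible, then $S(a',b',c',d',e',f')$ is SU(2)-admissible.
   Context: A triple of reals $(x,y,z)$ (order matters) is SU(2)-admissible if $x+y-z\ge0$, $x-y+z\ge0$, $-x+y+z\ge0$ and $x+y+z\ge-1$. It is SU(1,1)-admissible if $z\ge x+y+1$, $x\le y+z$, $y\le x+z$ and $x+y+z\ge-1$. A 6-tuple $(a,b,c,d,e,f)$ of reals is called SU(2)-admissible (resp. SU(1,1)-admissible) if each of the four ordered triples $(a,b,c)$, $(c,d,e)$, $(a,f,e)$, $(b,d,f)$ is SU(2)-admissible (resp. SU(1,1)-admissible). *)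

From Stdlib Require Import Reals Lra.
Open Scope R_scope.

Definition su2_adm3 (x y z : R) : Prop :=
  x + y - z >= 0 /\ x - y + z >= 0 /\ - x + y + z >= 0 /\ x + y + z >= -1.

Definition su11_adm3 (x y z : R) : Prop :=
  z >= x + y + 1 /\ x <= y + z /\ y <= x + z /\ x + y + z >= -1.

Definition su2_adm6 (a b c d e f : R) : Prop :=
  su2_adm3 a b c /\ su2_adm3 c d e /\ su2_adm3 a f e /\ su2_adm3 b d f.

Definition su11_adm6 (a b c d e f : R) : Prop :=
  su11_adm3 a b c /\ su11_adm3 c d e /\ su11_adm3 a f e /\ su11_adm3 b d f.

From Stdlib Require Import Reals Lra.
Open Scope R_scope.

Theorem mainTheorem1 (a' b' c' d' e' f' : R) :
  su11_adm6 a' b' c' d' e' f' ->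
  su2_adm6 ((a' + b' - d' + e') / 2)
           ((- a' - b' - d' + e') / 2 - 1)
           c'
           ((- a' + b' + d' + e') / 2)
           ((a' - b' + d' + e') / 2)
           f'.
Proof.
  unfold su11_adm6, su2_adm6, su11_adm3, su2_adm3.
  intros H; repeat split; lra.
Qed.
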